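(* Let $t\ge 1$ and let $K_{2*t}$ denote the complete multipartite graph with $t$ parts each of size $2$. If $G$ is a subgraph of $K_{2*t}$, then $G$ is $f$-AT for the constant function $f\equiv t$. Consequently, if $G$ is BK-free, then $G$ is not a subgraph of $K_{2*(\Delta(G)-1)}$.
   Context: For a graph $G$ and $f:V(G)\to\mathbb{Z}^+$, an orientation $D$ of $E(G)$ is an Alon--Tarsi orientation for $f$ if $d^+_D(v)<f(v)$ for every vertex $v$ and the number of spanning Eulerian subgraphs of $D$ (spanning subdigraphs in which every vertex has equal in- and out-degree) with an even number of edges differs from the number with an odd number of edges; $G$ is $f$-AT if such an orientation exists. A digraph (in which some edges may be oriented in both directions) is kernel-perfect if every induced subdigraph $D'$ has a kernel, i.e., a set $I\subseteq V(D')$ with no arc between two of its vertices such that every vertex of $D'$ not in $I$ has an out-neighbor in $I$. A graph $H$ is $f$-KP if some supergraph $H'$ of $H$ on the same vertex set (possibly with parallel edges) has a kernel-perfect orientation with $d^+(v)<f(v)$ for all $v$. A connected graph $G$ is BK-free if it has no induced subgraph $H$ that is $f_H$-AT or $f_H$-KP, where $f_H(v)=d_H(v)-1+\Delta(G)-d_G(v)$ for $v\in V(H)$. *)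

From mathcomp Require Import all_boot.
Set Implicit Arguments. Unset Strict Implicit. Unset Printing Implicit Defensive.

(* A finite simple graph: vertex type T : finType, adjacency e : rel T,
   assumed symmetric and irreflexive (hypotheses of the theorem).
   Induced subgraphs G[S] are described by their vertex set S : {set T}. *)

Section Graphs.
Variable T : finType.
Implicit Types (e D R : rel T) (S U I : {set T}).

Definition deg e S v : nat := #|[set u in S | e v u]|.

Definition maxdeg e : nat := \max_(v : T) deg e setT v.

Definition orientation e S D : Prop :=
  (forall x y, D x y -> [&& x \in S, y \in S & e x y]) /\
  (forall x y, x \in S -> y \in S -> e x y -> D x y != D y x).

Definition outdeg D S v : nat := #|[set u in S | D v u]|.

Definition eulerian D (A : {set T * T}) : bool :=
  (A \subset [set p | D p.1 p.2]) &&
  [forall v, #|[set p in A | p.1 == v]| == #|[set p in A | p.2 == v]|].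

Definition EE D : nat := #|[set A : {set T * T} | eulerian D A & ~~ odd #|A|]|.
Definition EO D : nat := #|[set A : {set T * T} | eulerian D A & odd #|A|]|.

Definition AT e S (f : T -> nat) : Prop :=
  exists D, orientation e S D /\
    (forall v, v \in S -> outdeg D S v < f v) /\ EE D != EO D.

Definition kernel R U I : Prop :=
  I \subset U /\
  (forall x y, x \in I -> y \in I -> ~~ R x y) /\
  (forall v, v \in U -> v \notin I -> exists2 w, w \in I & R v w).

Definition kernel_perfect R S : Prop :=
  forall U, U \subset S -> exists I, kernel R U I.

(* G[S] is f-KP: a loopless multigraph supergraph H' of G[S] on vertex set S,
   oriented; m x y = number of arcs x -> y (an edge oriented both ways is
   recorded as one arc in each direction). *)
Definition KP e S (f : T -> nat) : Prop :=
  exists m : T -> T -> nat,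
    (forall x y, 0 < m x y -> [&& x \in S, y \in S & x != y]) /\
    (forall x y, x \in S -> y \in S -> e x y -> 0 < m x y + m y x) /\
    kernel_perfect (fun x y => 0 < m x y) S /\
    (forall v, v \in S -> \sum_(y in S) m v y < f v).

(* f_H(v) = d_H(v) - 1 + Delta(G) - d_G(v); computed in nat as
   (d_H(v) + (Delta(G) - d_G(v))).-1, where Delta(G) - d_G(v) >= 0.
   The value -1 is truncated to 0, which is harmless since out-degrees
   must be < f_H(v) and no out-degree is < 0 either way. *)
Definition fH e S (v : T) : nat := (deg e S v + (maxdeg e - deg e setT v)).-1.

Definition connected_graph e : Prop :=
  0 < #|T| /\ forall x y, connect e x y.

Definition BKfree e : Prop :=
  connected_graph e /\
  forall S, S != set0 -> ~ AT e S (fH e S) /\ ~ KP e S (fH e S).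

(* G is a subgraph of K_{2*t}: injective map into t parts of size 2,
   edges only between different parts. *)
Definition subK2 e (t : nat) : Prop :=
  exists phi : T -> 'I_t * bool, injective phi /\
    forall x y, e x y -> (phi x).1 != (phi y).1.

End Graphs.

(* Alon-Tarsi via the quantitative Combinatorial Nullstellensatz. Put K := K_{2*t}
   on V = 'I_t * bool and orient K, and G inside it, from lower to higher part.
   The graph polynomial of K factors as P_G * P_Q, Q being the edges of K not in G.
   With phi(c) = prod_(c' <> c) (c - c'), one has sum_c c^k / phi(c) = [k = t-1] for
   k <= t-1, so summing P_K(x) / prod_w phi(x_w) over the grid {0..t-1}^V extracts the
   coefficient of prod_w x_w^(t-1), the total degree being 2t(t-1). Each grid term is
   >= 0: a nonzero one colours the 2 vertices of each part alike, and is then a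
   quotient of squares; the term of x(i,b) = i is > 0, so the coefficient is positive.
   Expanding P_G over orientations instead, the terms of a fixed out-degree sequence
   d add up to +-(EE D - EO D) for any orientation D with out-degrees d, since
   reversing an arc set A of D preserves out-degrees iff A is Eulerian. If no
   orientation with out-degrees < t had EE <> EO the coefficient would vanish.
   For the second claim, f_H is the constant Delta(G) - 1 when H = G. *)

From mathcomp Require Import all_boot all_order ssralg ssrnum poly rat.
From mathcomp Require Import zify.
Set Implicit Arguments. Unset Strict Implicit. Unset Printing Implicit Defensive.
Import Order.TTheory GRing.Theory Num.Theory.

Section LagrangeSum.
Variables (F : fieldType) (n : nat) (a : 'I_n -> F).
Hypothesis a_inj : injective a.
Local Open Scope ring_scope.

Definition lagrange_denom (i : 'I_n) : F := \prod_(j | j != i) (a i - a j).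

Lemma lagrange_denom_neq0 i : lagrange_denom i != 0.
Proof.
apply/prodf_neq0 => j ji; rewrite subr_eq0.
by apply: contra ji => /eqP/a_inj ->.
Qed.

Lemma sum_lagrange_pow k : (0 < n)%N -> (k <= n.-1)%N ->
  \sum_i a i ^+ k / lagrange_denom i = (k == n.-1)%:R.
Proof.
move=> n_gt0 le_kn; have lt_kn : (k < n)%N by rewrite (leq_ltn_trans le_kn) ?ltn_predL.
pose L i : {poly F} := \prod_(j | j != i) ('X - (a j)%:P).
have size_L i : size (L i) = n.
  rewrite size_prod => [|j _]; last by rewrite polyXsubC_eq0.
  rewrite (eq_bigr (fun _ => 2%N)) => [|j _]; last by rewrite size_XsubC.
  by rewrite sum_nat_const cardC1 card_ord; lia.
have L_lead i : (L i)`_n.-1 = 1.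
  by rewrite -[RHS](lead_coef_prod_XsubC (index_enum 'I_n) (fun j => j != i) a) lead_coefE size_L.
have interp : \sum_i (a i ^+ k / lagrange_denom i) *: L i = 'X^k.
  apply/eqP; rewrite -subr_eq0; apply/eqP.
  apply: (@roots_geq_poly_eq0 _ _ [seq a i | i <- enum 'I_n]).
  - apply/allP => _ /mapP [i _ ->]; rewrite /root hornerD hornerN hornerXn.
    rewrite horner_sum (bigD1 i) //= big1 ?addr0 => [|j ji].
      rewrite hornerZ horner_prod (eq_bigr (fun j => a i - a j)).
        by rewrite -/(lagrange_denom i) mulfVK ?lagrange_denom_neq0 ?subrr.
      by move=> j _; rewrite hornerXsubC.
    by rewrite hornerZ horner_prod (bigD1 i) 1?eq_sym //= hornerXsubC subrr mul0r mulr0.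
  - by rewrite map_inj_uniq ?enum_uniq.
  - rewrite size_map -cardE card_ord.
    apply: (leq_trans (size_polyD _ _)); rewrite geq_max size_polyN size_polyXn.
    rewrite lt_kn andbT.
    apply: (leq_trans (size_sum _ _ _)); apply/bigmax_leqP => i _.
    by rewrite (leq_trans (size_scale_leq _ _)) // size_L.
have := congr1 (fun p : {poly F} => p`_n.-1) interp.
rewrite coefXn coef_sum eq_sym => <-.
by apply: eq_bigr => i _; rewrite coefZ L_lead mulr1.
Qed.

End LagrangeSum.

Section ProductExpansion.
Variables (R : comRingType) (I J : finType) (A : {set I}).
Local Open Scope ring_scope.

(* A selection [f] picks, in the a-th factor of a product of differences, the first
   term if [f a] and the second otherwise; it is [true] off [A] to make the choice
   unique. *)
Definition selection (f : {ffun I -> bool}) := [forall a, (a \notin A) ==> f a].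

Definition nflips (f : {ffun I -> bool}) := #|[set a in A | ~~ f a]|.

Lemma prod_signr (P : pred I) :
  \prod_(a in A) (-1) ^+ P a = (-1) ^+ #|[set a in A | P a]| :> R.
Proof.
rewrite (eq_bigr (fun a => if P a then -1 else 1)) => [|a _]; last by case: (P a).
by rewrite -big_mkcondr prodr_const; congr (_ ^+ _); apply: eq_card => a; rewrite !inE.
Qed.

Lemma prod_fibres (g : I -> J) (x : J -> R) :
  \prod_(a in A) x (g a) = \prod_w x w ^+ #|[set a in A | g a == w]|.
Proof.
rewrite (partition_big g predT) //; apply: eq_bigr => w _.
rewrite (eq_bigr (fun _ => x w)) => [|a /andP[_ /eqP ->] //].
by rewrite prodr_const; congr (_ ^+ _); apply: eq_card => a; rewrite !inE.
Qed.

Lemma prod_subr_expand (h1 h2 : I -> J) (x : J -> R) :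
  \prod_(a in A) (x (h1 a) - x (h2 a)) =
  \sum_(f | selection f) (-1) ^+ nflips f *
     \prod_w x w ^+ #|[set a in A | (if f a then h1 a else h2 a) == w]|.
Proof.
pose F a (b : bool) := if a \in A then (if b then x (h1 a) else - x (h2 a))
                       else b%:R.
transitivity (\prod_a \sum_b F a b).
  rewrite big_mkcond; apply: eq_bigr => a _.
  by rewrite big_bool /F; case: (a \in A); rewrite /= ?addr0.
rewrite bigA_distr_bigA (bigID selection) /= [X in _ + X]big1 ?addr0 => [|f].
  apply: eq_bigr => f /forallP f_sel.
  rewrite -prod_fibres /nflips -prod_signr -big_split [RHS]big_mkcond /=.
  apply: eq_bigr => a _; rewrite /F; case: ifP => aA; last first.
    by have := f_sel a; rewrite aA => /= ->.
  by case: (f a); rewrite ?mul1r ?mulN1r.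
rewrite negb_forall => /existsP [a]; rewrite negb_imply => /andP [aA /negbTE fa].
by rewrite (bigD1 a) //= /F (negbTE aA) fa mul0r.
Qed.

End ProductExpansion.

Lemma sum_card_fibres (I J : finType) (A : {set I}) (h : I -> J) :
  \sum_w #|[set a in A | h a == w]| = #|A|.
Proof.
rewrite -sum1_card (partition_big h predT) //=; apply: eq_bigr => w _.
by rewrite sum1_card; apply: eq_card => a; rewrite !inE.
Qed.

Lemma sum_eq_const (W : finType) (n : W -> nat) m :
  \sum_w n w = #|W| * m -> (forall w, m <= n w) -> forall w, n w = m.
Proof.
move=> sum_n ge_n w; apply/eqP; rewrite eqn_leq ge_n andbT -subn_eq0.
have : \sum_w (n w - m) + \sum_(w : W) m = 0 + \sum_(w : W) m.
  by rewrite -big_split add0n sum_nat_const -sum_n; apply: eq_bigr => w' _ /=; rewrite subnK.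
by move/addIn/eqP; rewrite sum_nat_eq0 => /forallP /(_ w).
Qed.

Lemma card_outarcs (T : finType) (A : {set T * T}) v :
  #|[set u | (v, u) \in A]| = #|[set p in A | p.1 == v]|.
Proof.
have -> : [set p in A | p.1 == v] = (pair v) @: [set u | (v, u) \in A].
  apply/setP => -[x y]; rewrite !inE /=; apply/andP/imsetP => [[xyA /eqP xv]|[u]].
    by exists y; rewrite -?xv ?inE.
  by rewrite inE => vuA [-> ->].
by rewrite card_imset // => x y [].
Qed.

Lemma card_split (T : finType) (A B : {set T}) (P : pred T) : A \subset B ->
  #|[set p in B | P p]| = #|[set p in A | P p]| + #|[set p in B :\: A | P p]|.
Proof.
move=> /subsetP AB; rewrite -(cardsID A [set p in B | P p]).
have -> : [set p in A | P p] = [set p in B | P p] :&: A.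
  apply/setP => p; rewrite !inE.
  by case: (boolP (p \in A)) => [pA|]; rewrite ?andbT ?andbF // (AB p pA).
suff -> : [set p in B :\: A | P p] = [set p in B | P p] :\: A by [].
by apply/setP => p; rewrite !inE andbA.
Qed.

Section Reorientation.
Variables (T : finType) (e : rel T) (Ar : {set T * T}).
Hypothesis e_sym : symmetric e.
Hypothesis Ar_edge : forall a, a \in Ar -> e a.1 a.2.
Hypothesis Ar_orients : forall x y, e x y -> ((x, y) \in Ar) != ((y, x) \in Ar).

Definition rev_arc (p : T * T) := (p.2, p.1).

Lemma Ar_asym p : p \in Ar -> rev_arc p \notin Ar.
Proof. by case: p => x y xyA; have := Ar_orients (Ar_edge xyA); rewrite xyA. Qed.

Definition sel_arc (f : {ffun T * T -> bool}) a := if f a then a else rev_arc a.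
Definition sel_arcs f := sel_arc f @: Ar.
Definition reorient f : rel T := fun x y => (x, y) \in sel_arcs f.
Definition outdeg_sel f v := #|[set a in Ar | (sel_arc f a).1 == v]|.

Lemma sel_arc_inj f : {in Ar &, injective (sel_arc f)}.
Proof.
move=> [x y] [x' y'] xyA xyA'; rewrite /sel_arc.
case: (f _); case: (f _) => //= -[? ?]; subst => //.
all: by have := Ar_asym xyA; rewrite /rev_arc /= xyA'.
Qed.

Lemma card_sel_arcs f (P : pred (T * T)) :
  #|[set a in Ar | P (sel_arc f a)]| = #|[set p in sel_arcs f | P p]|.
Proof.
have -> : [set p in sel_arcs f | P p] = sel_arc f @: [set a in Ar | P (sel_arc f a)].
  apply/setP => p; rewrite !inE; apply/andP/imsetP => [[/imsetP [a aA ->] Pa]|[a]].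
    by exists a; rewrite ?inE ?aA.
  by rewrite inE => /andP [aA Pa] ->; rewrite imset_f.
by apply/esym/card_in_imset => a b /[!inE] /andP [aA _] /andP [bA _]; apply: sel_arc_inj.
Qed.

Lemma mem_sel_arcs f p :
  (p \in sel_arcs f) = (p \in Ar) && f p || (rev_arc p \in Ar) && ~~ f (rev_arc p).
Proof.
apply/imsetP/idP => [[a aA ->]|].
  by case: a aA => x y xyA; rewrite /sel_arc; case fxy: (f _); rewrite /= ?xyA ?fxy ?orbT.
case/orP => /andP [pA fp]; first by exists p; rewrite /sel_arc ?fp.
by exists (rev_arc p); rewrite // /sel_arc (negbTE fp); case: p {pA fp}.
Qed.

Lemma reorient_orientation f : orientation e setT (reorient f).
Proof.
split=> [x y | x y _ _ /Ar_orients].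
  rewrite /reorient mem_sel_arcs /= !inE => /orP [] /andP [/Ar_edge //].
  by rewrite e_sym.
rewrite /reorient !mem_sel_arcs /=.
by case: ((x, y) \in Ar); case: ((y, x) \in Ar) => //= _; rewrite ?andbT; case: (f _).
Qed.

Lemma outdeg_reorient f v : outdeg (reorient f) setT v = outdeg_sel f v.
Proof.
rewrite /outdeg /outdeg_sel (card_sel_arcs f (fun p => p.1 == v)) -card_outarcs.
by apply: eq_card => u; rewrite !inE.
Qed.

Section SignedCount.
Variable f0 : {ffun T * T -> bool}.
Local Notation D := (reorient f0).
Implicit Types (A : {set T * T}) (g : {ffun T * T -> bool}).

Definition reverse_on (A : {set T * T}) : {ffun T * T -> bool} :=
  [ffun a => (a \in Ar) ==> (f0 a (+) (sel_arc f0 a \in A))].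

Definition reversed_arcs (g : {ffun T * T -> bool}) := sel_arc f0 @: [set a in Ar | g a != f0 a].

Lemma sel_arcs_reorient : [set p | D p.1 p.2] = sel_arcs f0.
Proof. by apply/setP => -[x y]; rewrite inE. Qed.

Lemma mem_sel_arc_imset (B : {set T * T}) a : B \subset Ar -> a \in Ar ->
  (sel_arc f0 a \in sel_arc f0 @: B) = (a \in B).
Proof.
move=> /subsetP BA aA; apply/imsetP/idP => [[b bB /sel_arc_inj abE]|aB].
  by rewrite (abE aA (BA b bB)).
by exists a.
Qed.

Lemma reverse_onK g : selection Ar g -> reverse_on (reversed_arcs g) = g.
Proof.
move=> /forallP g_sel; apply/ffunP => a; rewrite ffunE.
case: (boolP (a \in Ar)) => aA /=; last by move/implyP: (g_sel a) => /(_ aA) ->.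
rewrite mem_sel_arc_imset ?inE ?aA //; last by apply/subsetP => b /[!inE] /andP [].
by case: (g a); case: (f0 a).
Qed.

Lemma reversed_arcsK A : reversed_arcs (reverse_on A) = A :&: sel_arcs f0.
Proof.
apply/setP => p; rewrite inE; apply/imsetP/andP => [[a]|[pA /imsetP [a aA pE]]].
  rewrite inE ffunE => /andP [aA]; rewrite aA /= => flipped ->.
  split; last exact: imset_f.
  by move: flipped; case: (f0 a); case: (_ \in A).
by exists a; rewrite // inE ffunE aA /= -pE pA; case: (f0 a).
Qed.

Lemma selection_reverse_on A : selection Ar (reverse_on A).
Proof. by apply/forallP => a; apply/implyP => aA; rewrite ffunE (negbTE aA). Qed.

Lemma sel_arc_reverse_on A a : a \in Ar ->
  sel_arc (reverse_on A) a = if sel_arc f0 a \in A then rev_arc (sel_arc f0 a) else sel_arc f0 a.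
Proof.
move=> aA; rewrite [LHS]/sel_arc ffunE aA /= /sel_arc.
by case: (f0 a) => /=; [case: (a \in A) | case: (rev_arc a \in A); case: a {aA}].
Qed.

Lemma outdeg_reverse_on A v : A \subset sel_arcs f0 ->
  outdeg_sel (reverse_on A) v + #|[set p in A | p.1 == v]| =
  outdeg_sel f0 v + #|[set p in A | p.2 == v]|.
Proof.
move=> sAD; pose P p := if p \in A then p.2 == v else p.1 == v.
have -> : outdeg_sel (reverse_on A) v = #|[set a in Ar | P (sel_arc f0 a)]|.
  apply: eq_card => a; rewrite !inE; case: (boolP (a \in Ar)) => //= aA.
  by rewrite sel_arc_reverse_on // /P; case: (sel_arc f0 a \in A).
rewrite /outdeg_sel (card_sel_arcs f0 P) (card_sel_arcs f0 (fun p => p.1 == v)).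
rewrite (card_split P sAD) (card_split (fun p => p.1 == v) sAD).
have eqP1 : #|[set p in A | P p]| = #|[set p in A | p.2 == v]|.
  by apply: eq_card => p; rewrite !inE /P; case: (p \in A).
have eqP2 : #|[set p in sel_arcs f0 :\: A | P p]| = #|[set p in sel_arcs f0 :\: A | p.1 == v]|.
  by apply: eq_card => p; rewrite !inE /P; case: (p \in A).
by rewrite eqP1 eqP2 addnC [X in _ + X]addnC addnA.
Qed.

Lemma reverse_on_cond A :
  (selection Ar (reverse_on A) && [forall v, outdeg_sel (reverse_on A) v == outdeg_sel f0 v])
    && (reversed_arcs (reverse_on A) == A) = eulerian D A.
Proof.
rewrite reversed_arcsK selection_reverse_on /eulerian sel_arcs_reorient.
have -> : (A :&: sel_arcs f0 == A) = (A \subset sel_arcs f0) by apply/eqP/setIidPl.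
case: (boolP (A \subset sel_arcs f0)) => [sAD|]; rewrite ?andbF //= andbT.
apply: eq_forallb => v; have balance := outdeg_reverse_on v sAD.
apply/eqP/eqP => [same_outdeg|same_inout]; move: balance.
  by rewrite same_outdeg => /addnI.
by rewrite same_inout => /addIn.
Qed.

Local Open Scope ring_scope.

Lemma signr_reverse_on (R : comRingType) A : A \subset sel_arcs f0 ->
  (-1) ^+ nflips Ar (reverse_on A) = (-1) ^+ nflips Ar f0 * (-1) ^+ #|A| :> R.
Proof.
move=> sAD; rewrite /nflips -!prod_signr.
rewrite (eq_bigr (fun a => (-1) ^+ (~~ f0 a) * (-1) ^+ (sel_arc f0 a \in A))).
  rewrite big_split /= !prod_signr (card_sel_arcs f0 (fun p => p \in A)).
  by congr (_ * _ ^+ _); apply: eq_card => p; rewrite !inE andb_idl // => /(subsetP sAD).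
by move=> a aA; rewrite ffunE aA -signr_addb addNb.
Qed.

(* [reverse_on] is a bijection from the Eulerian subgraphs of [D] onto the selections
   with the out-degrees of [f0], and it multiplies the sign by [(-1) ^+ #|A|]. *)
Lemma sum_signr_same_outdeg (R : comRingType) :
  \sum_(g | selection Ar g && [forall v, outdeg_sel g v == outdeg_sel f0 v])
     (-1) ^+ nflips Ar g
  = (-1) ^+ nflips Ar f0 * ((EE D)%:R - (EO D)%:R) :> R.
Proof.
rewrite (reindex_onto reverse_on reversed_arcs) => [|g /andP [g_sel _]]; last first.
  exact: reverse_onK.
rewrite (eq_bigl (eulerian D)) => [|A]; last exact: reverse_on_cond.
rewrite (eq_bigr (fun A => (-1) ^+ nflips Ar f0 * (-1) ^+ #|A|)) => [|A /andP [sAD _]].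
  rewrite -big_distrr (bigID (fun A => odd #|A|)) /= addrC; congr (_ * (_ + _)).
    rewrite (eq_bigr (fun _ => 1)) => [|A /andP [_ /negbTE]]; last by rewrite -signr_odd => ->.
    by rewrite sumr_const /EE cardsE.
  rewrite (eq_bigr (fun _ => -1)) => [|A /andP [_]]; last by rewrite -signr_odd => ->.
  by rewrite sumr_const /EO cardsE -mulNrn.
by apply: signr_reverse_on; rewrite -sel_arcs_reorient.
Qed.

End SignedCount.
End Reorientation.

Section CompleteMultipartite.
Variables (T : finType) (e : rel T) (t : nat) (phi : T -> 'I_t * bool).
Hypotheses (e_sym : symmetric e) (t_gt0 : 0 < t) (phi_inj : injective phi).
Hypothesis phi_parts : forall x y, e x y -> (phi x).1 != (phi y).1.

Local Notation V := ('I_t * bool)%type.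

Definition G_arcs := [set a : T * T | e a.1 a.2 && ((phi a.1).1 < (phi a.2).1)].
(* The parts of K_{2*t} are the fibres of the first projection of [V]. *)
Definition K_arcs := [set a : V * V | a.1.1 < a.2.1].
Definition phi_arc (a : T * T) := (phi a.1, phi a.2).
Definition Q_arcs := K_arcs :\: phi_arc @: G_arcs.

Lemma G_arcs_edge a : a \in G_arcs -> e a.1 a.2.
Proof. by rewrite inE => /andP []. Qed.

Lemma G_arcs_orients x y : e x y -> ((x, y) \in G_arcs) != ((y, x) \in G_arcs).
Proof.
move=> xy; rewrite !inE /= xy e_sym xy /=.
by have := phi_parts xy; rewrite -(inj_eq val_inj); case: ltngtP.
Qed.

Lemma phi_arc_inj : injective phi_arc.
Proof. by move=> [x y] [x' y'] [/phi_inj -> /phi_inj ->]. Qed.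

Lemma phi_arcs_sub : phi_arc @: G_arcs \subset K_arcs.
Proof. by apply/subsetP => _ /imsetP [a /[!inE] /andP [_ lt_a] ->]. Qed.

Lemma card_K_arcs : #|K_arcs| = #|{: V}| * t.-1.
Proof.
pose lt (u v : V) : nat := u.1 < v.1.
have K_sum : #|K_arcs| = \sum_u \sum_v lt u v.
  rewrite pair_bigA -sum1_card big_mkcond /=.
  by apply: eq_bigr => p _; rewrite inE /lt; case: (_ < _).
have parts_ne u : \sum_v (lt u v + lt v u) = t.-1 * 2.
  have -> : t.-1 * 2 = #|setX [set~ u.1] [set: bool]|.
    by rewrite cardsX cardsC1 card_ord cardsT card_bool.
  rewrite -sum1_card [RHS]big_mkcond /=; apply: eq_bigr => v _.
  by rewrite !inE /lt -(inj_eq val_inj) eq_sym /=; case: ltngtP.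
have sum_lt : #|K_arcs| * 2 = \sum_u \sum_v (lt u v + lt v u).
  rewrite K_sum muln2 -addnn {2}exchange_big -big_split /=.
  by apply: eq_bigr => u _; rewrite big_split.
apply/eqP; rewrite -(eqn_pmul2r (isT : 0 < 2)) sum_lt (eq_bigr _ (fun u _ => parts_ne u)).
by rewrite sum_nat_const mulnA.
Qed.

Lemma card_G_Q_arcs : #|G_arcs| + #|Q_arcs| = #|K_arcs|.
Proof.
rewrite /Q_arcs cardsDS ?phi_arcs_sub // card_imset; last exact: phi_arc_inj.
have := subset_leq_card phi_arcs_sub; rewrite card_imset; last exact: phi_arc_inj.
by move=> ?; rewrite subnKC.
Qed.

Local Open Scope ring_scope.

Definition node (c : 'I_t) : rat := (val c)%:R.

Lemma node_inj : injective node.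
Proof. by move=> c d /eqP; rewrite eqr_nat => /eqP/val_inj. Qed.

Local Notation denom := (lagrange_denom node).

Definition K_poly (x : {ffun V -> 'I_t}) :=
  \prod_(a in K_arcs) (node (x a.1) - node (x a.2)).
Definition K_denom (x : {ffun V -> 'I_t}) := \prod_w denom (x w).
(* By the quantitative Combinatorial Nullstellensatz this is the coefficient of
   [prod_w X_w ^+ t.-1] in [prod_(a in K_arcs) (X_(a.1) - X_(a.2))]; the part of
   that identity needed here is [coloring_sum_expand]. *)
Definition coloring_sum := \sum_(x : {ffun V -> 'I_t}) K_poly x / K_denom x.

Definition G_exponent (f : {ffun T * T -> bool}) (w : V) :=
  #|[set a in G_arcs | (if f a then phi a.1 else phi a.2) == w]|.
Definition Q_exponent (g : {ffun V * V -> bool}) (w : V) :=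
  #|[set a in Q_arcs | (if g a then a.1 else a.2) == w]|.

Lemma sum_G_Q_exponents f g : (\sum_w (G_exponent f w + Q_exponent g w) = #|{: V}| * t.-1)%N.
Proof. by rewrite big_split /= !sum_card_fibres card_G_Q_arcs card_K_arcs. Qed.

Lemma K_poly_split x : K_poly x =
  \prod_(a in G_arcs) (node (x (phi a.1)) - node (x (phi a.2))) *
  \prod_(a in Q_arcs) (node (x a.1) - node (x a.2)).
Proof.
rewrite /K_poly (bigID (mem (phi_arc @: G_arcs))) /=; congr (_ * _).
  rewrite (eq_bigl (mem (phi_arc @: G_arcs))) => [|a]; last first.
    by apply/andb_idl => /(subsetP phi_arcs_sub).
  by rewrite big_imset //= => a b _ _; apply: phi_arc_inj.
by apply: eq_bigl => a; rewrite !inE andbC.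
Qed.

Lemma prod_sum_lagrange (n : V -> nat) : (\sum_w n w = #|{: V}| * t.-1)%N ->
  \prod_w \sum_c node c ^+ n w / denom c = [forall w, n w == t.-1]%:R.
Proof.
move=> sum_n; have [w0 low|high] := pickP (fun w => n w < t.-1)%N.
  rewrite (bigD1 w0) //= (sum_lagrange_pow node_inj) ?(ltnW low) // (ltn_eqF low) mul0r.
  by case: forallP => // /(_ w0); rewrite ltn_eqF.
have n_eq : forall w, n w = t.-1.
  by apply: sum_eq_const sum_n _ => w; rewrite leqNgt high.
rewrite big1 => [|w _]; last by rewrite n_eq (sum_lagrange_pow node_inj) ?eqxx.
by case: forallP => // -[] w; rewrite n_eq.
Qed.

Lemma coloring_sum_expand : coloring_sum =
  \sum_(f | selection G_arcs f) \sum_(g | selection Q_arcs g)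
     (-1) ^+ nflips G_arcs f * (-1) ^+ nflips Q_arcs g *
     [forall w, G_exponent f w + Q_exponent g w == t.-1]%N%:R.
Proof.
rewrite /coloring_sum.
transitivity (\sum_(x : {ffun V -> 'I_t})
   \sum_(f | selection G_arcs f) \sum_(g | selection Q_arcs g)
     (-1) ^+ nflips G_arcs f * (-1) ^+ nflips Q_arcs g *
     \prod_w (node (x w) ^+ (G_exponent f w + Q_exponent g w) / denom (x w))).
  apply: eq_bigr => x _; rewrite K_poly_split.
  pose y w := node (x w).
  rewrite (@prod_subr_expand _ _ _ G_arcs (fun a => phi a.1) (fun a => phi a.2) y).
  rewrite (@prod_subr_expand _ _ _ Q_arcs (fun a => a.1) (fun a => a.2) y).
  rewrite mulr_suml mulr_suml; apply: eq_bigr => f _.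
  rewrite mulr_sumr mulr_suml; apply: eq_bigr => g _.
  have -> : \prod_w (node (x w) ^+ (G_exponent f w + Q_exponent g w) / denom (x w)) =
      (\prod_w node (x w) ^+ G_exponent f w) * (\prod_w node (x w) ^+ Q_exponent g w) / K_denom x.
    by rewrite /K_denom -prodfV -!big_split; apply: eq_bigr => w _; rewrite exprD.
  by rewrite mulrACA -[LHS]mulrA.
rewrite exchange_big /=; apply: eq_bigr => f _.
rewrite exchange_big /=; apply: eq_bigr => g _.
rewrite -big_distrr /=; congr (_ * _).
rewrite -(bigA_distr_bigA (fun w c => node c ^+ (G_exponent f w + Q_exponent g w) / denom c)) /=.
exact: prod_sum_lagrange (sum_G_Q_exponents f g).
Qed.

Lemma prod_pairs (P : 'I_t -> rat) : \prod_(u : V) P u.1 = (\prod_i P i) ^+ 2.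
Proof.
rewrite -(pair_bigA _ (fun i (b : bool) => P i)) /= expr2 -big_split /=.
by apply: eq_bigr => i _; rewrite big_bool.
Qed.

Section NonzeroTerm.
Variable x : {ffun V -> 'I_t}.
Hypothesis K_poly_neq0 : K_poly x != 0.

Lemma K_poly_neq0_proper u v : u.1 != v.1 -> x u != x v.
Proof.
have ne a : a \in K_arcs -> x a.1 != x a.2.
  move=> aK; have := prodf_neq0 _ _ K_poly_neq0 a aK.
  by rewrite subr_eq0; apply: contra => /eqP ->.
rewrite -(inj_eq val_inj) /=; case: ltngtP => // lt_uv _.
  by apply: (ne (u, v)); rewrite inE.
by rewrite eq_sym; apply: (ne (v, u)); rewrite inE.
Qed.

(* Pigeonhole: the [t] parts [(j, false)] already use all [t] colours. *)
Lemma K_poly_neq0_parts u : x u = x (u.1, false).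
Proof.
case: u => i [] //=; pose y j := x (j, false).
have y_inj : injective y.
  by move=> j k /eqP; apply: contraTeq => jk; apply: K_poly_neq0_proper.
have /codomP [j xij] := inj_card_onto y_inj (leqnn _) (x (i, true)).
have [ji_eq|ji] := eqVneq j i; first by rewrite xij /y ji_eq.
by have := @K_poly_neq0_proper (i, true) (j, false); rewrite eq_sym ji xij eqxx => /(_ isT).
Qed.

Lemma K_poly_neq0_ge0 : 0 <= K_poly x.
Proof.
pose y i := node (x (i, false)).
pose H (i j : 'I_t) := if (i < j)%N then y i - y j else 1.
have -> : K_poly x = \prod_(u : V) \prod_(v : V) H u.1 v.1.
  rewrite pair_bigA /K_poly big_mkcond /=; apply: eq_bigr => -[u v] _.
  by rewrite inE /H /= /y -!K_poly_neq0_parts; case: (_ < _)%N.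
rewrite (eq_bigr (fun u : V => (\prod_j H u.1 j) ^+ 2)) => [|u _]; last exact: prod_pairs.
by rewrite (prod_pairs (fun i => (\prod_j H i j) ^+ 2)) sqr_ge0.
Qed.

Lemma K_poly_neq0_denom_gt0 : 0 < K_denom x.
Proof.
rewrite /K_denom (eq_bigr (fun u : V => denom (x (u.1, false)))) => [|u _]; last first.
  by rewrite -K_poly_neq0_parts.
rewrite (prod_pairs (fun i => denom (x (i, false)))) lt_def sqr_ge0 andbT sqrf_eq0.
by apply/prodf_neq0 => i _; apply: lagrange_denom_neq0 node_inj _.
Qed.

End NonzeroTerm.

Lemma coloring_term_ge0 x : 0 <= K_poly x / K_denom x.
Proof.
have [->|nz] := eqVneq (K_poly x) 0; first by rewrite mul0r.
by rewrite divr_ge0 ?K_poly_neq0_ge0 // ltW ?K_poly_neq0_denom_gt0.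
Qed.

Lemma coloring_sum_gt0 : 0 < coloring_sum.
Proof.
pose x0 : {ffun V -> 'I_t} := [ffun u => u.1].
have nz : K_poly x0 != 0.
  apply/prodf_neq0 => a; rewrite inE !ffunE => lt_a.
  by rewrite subr_eq0 (inj_eq node_inj) -(inj_eq val_inj) neq_ltn lt_a.
rewrite /coloring_sum (bigD1 x0) //= ltr_wpDr ?sumr_ge0 // => [x _|].
  exact: coloring_term_ge0.
by rewrite divr_gt0 ?K_poly_neq0_denom_gt0 // lt_def nz K_poly_neq0_ge0.
Qed.

Lemma G_exponent_phi f v : G_exponent f (phi v) = outdeg_sel G_arcs f v.
Proof.
by apply: eq_card => a; rewrite !inE /sel_arc; case: (f a); rewrite /= (inj_eq phi_inj).
Qed.

Lemma G_exponent_notin_codom f w : (forall v, phi v != w) -> G_exponent f w = 0%N.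
Proof.
move=> phi_ne; apply: eq_card0 => a; rewrite !inE.
by case: (f a); rewrite (negbTE (phi_ne _)) andbF.
Qed.

Local Notation N := #|{: T * T}|.

(* The out-degree sequence of [f], as a value in a finite type so that it can serve
   as a key for [partition_big]. *)
Definition outdeg_key (f : {ffun T * T -> bool}) : {ffun V -> 'I_N.+1} :=
  [ffun w => inord (G_exponent f w)].

Lemma outdeg_key_val f w : outdeg_key f w = G_exponent f w :> nat.
Proof. by rewrite ffunE inordK // ltnS max_card. Qed.

Lemma eq_outdeg_key f f' :
  (outdeg_key f == outdeg_key f') = [forall v, outdeg_sel G_arcs f v == outdeg_sel G_arcs f' v].
Proof.
apply/eqP/forallP => [key_eq v | outdeg_eq].
  by rewrite -!G_exponent_phi -!outdeg_key_val key_eq.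
apply/ffunP => w; apply: val_inj; rewrite /= !outdeg_key_val.
have [v /eqP <-|phi_ne] := pickP (fun v => phi v == w).
  by rewrite !G_exponent_phi; apply/eqP.
by rewrite !G_exponent_notin_codom // => v; rewrite phi_ne.
Qed.

Definition Q_weight (k : {ffun V -> 'I_N.+1}) : rat :=
  \sum_(g | selection Q_arcs g)
    (-1) ^+ nflips Q_arcs g * [forall w, k w + Q_exponent g w == t.-1]%N%:R.

Lemma coloring_sum_eq0 :
  (forall f, selection G_arcs f -> (forall v, outdeg_sel G_arcs f v < t)%N ->
     EE (reorient G_arcs f) = EO (reorient G_arcs f)) ->
  coloring_sum = 0.
Proof.
move=> EE_EO; rewrite coloring_sum_expand.
transitivity (\sum_(f | selection G_arcs f) (-1) ^+ nflips G_arcs f * Q_weight (outdeg_key f)).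
  apply: eq_bigr => f _; rewrite /Q_weight big_distrr; apply: eq_bigr => g _.
  rewrite /= mulrA; congr (_ * (nat_of_bool _)%:R).
  by apply: eq_forallb => w; rewrite outdeg_key_val.
rewrite (partition_big outdeg_key predT) //=; apply: big1 => k _.
rewrite (eq_bigr (fun f => (-1) ^+ nflips G_arcs f * Q_weight k)) => [|f /andP [_ /eqP ->] //].
rewrite -big_distrl /=.
have [->|weight_nz] := eqVneq (Q_weight k) 0; first by rewrite mulr0.
have [f0 /andP [f0_sel /eqP key_f0]|no_f] :=
  pickP (fun f => selection G_arcs f && (outdeg_key f == k)); last by rewrite big_pred0 ?mul0r.
have [g /andP [_ /forallP g_exp]|no_g] :=
  pickP (fun g => selection Q_arcs g && [forall w, k w + Q_exponent g w == t.-1]%N); last first.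
  move: weight_nz; rewrite /Q_weight big1 ?eqxx // => g g_sel.
  by have := no_g g; rewrite g_sel /= => ->; rewrite mulr0.
have f0_low v : (outdeg_sel G_arcs f0 v < t)%N.
  rewrite -G_exponent_phi -outdeg_key_val key_f0 (@leq_ltn_trans t.-1) ?ltn_predL //.
  by have /eqP <- := g_exp (phi v); apply: leq_addr.
rewrite (eq_bigl (fun f => selection G_arcs f &&
    [forall v, outdeg_sel G_arcs f v == outdeg_sel G_arcs f0 v])) => [|f]; last first.
  by rewrite -key_f0 eq_outdeg_key.
by rewrite (sum_signr_same_outdeg G_arcs_edge G_arcs_orients) EE_EO // subrr mulr0 mul0r.
Qed.

Lemma AT_complete_multipartite_subgraph : AT e setT (fun _ => t).
Proof.
have [f /and3P [f_sel /forallP f_low EE_f]|no_f] := pickP (fun f =>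
  [&& selection G_arcs f, [forall v, outdeg_sel G_arcs f v < t]%N &
      EE (reorient G_arcs f) != EO (reorient G_arcs f)]).
  exists (reorient G_arcs f); split.
    exact: (reorient_orientation e_sym G_arcs_edge G_arcs_orients f).
  by split=> // v _; rewrite (outdeg_reorient G_arcs_edge G_arcs_orients).
suff: coloring_sum = 0 by move/eqP; rewrite gt_eqF ?coloring_sum_gt0.
apply: coloring_sum_eq0 => f f_sel f_low; apply/eqP.
by move: (no_f f); rewrite f_sel (introT forallP f_low) /= => /negbT; rewrite negbK.
Qed.

End CompleteMultipartite.

Lemma subK2_AT (T : finType) (e : rel T) t :
  symmetric e -> 0 < t -> subK2 e t -> AT e setT (fun _ => t).
Proof.
move=> e_sym t_gt0 [phi [phi_inj phi_parts]].
exact: AT_complete_multipartite_subgraph e_sym t_gt0 phi_inj phi_parts.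
Qed.

Lemma subK2_gt0 (T : finType) (e : rel T) t (x : T) : subK2 e t -> 0 < t.
Proof. by case=> phi _; case: (phi x) => -[m m_lt _]; apply: leq_ltn_trans m_lt. Qed.

Lemma eq_AT (T : finType) (e : rel T) (S : {set T}) (f g : T -> nat) :
  {in S, f =1 g} -> AT e S f -> AT e S g.
Proof.
move=> fg [D [orD [outD EE_EO]]]; exists D; split=> //; split=> // v vS.
by rewrite -fg ?outD.
Qed.

Lemma fH_setT (T : finType) (e : rel T) v : fH e setT v = (maxdeg e).-1.
Proof.
rewrite /fH subnKC // /maxdeg.
exact: (@leq_bigmax T (fun v => deg e setT v)).
Qed.

Theorem mainTheorem3 (T : finType) (e : rel T)
  (esym : symmetric e) (eirr : irreflexive e) :
  (forall t : nat, 1 <= t -> subK2 e t -> AT e setT (fun _ => t)) /\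
  (BKfree e -> ~ subK2 e (maxdeg e - 1)).
Proof.
split=> [t t_gt0|[[/card_gt0P [x0 _] _] BK] K2]; first exact: subK2_AT.
have setT_neq0 : [set: T] != set0 by apply/set0Pn; exists x0.
apply: (BK setT setT_neq0).1.
apply: eq_AT (subK2_AT esym (subK2_gt0 x0 K2) K2) => v _.
by rewrite fH_setT subn1.
Qed.
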